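(* In the setting of the context, for $c\in\mathbb{R}$ let $P(c)$ be the polygon with vertices $P_i(c)=M_i+cU_i$, $1\le i\le 2n$, and write $P_{i+1}(c)-P_i(c)=\lambda_{i+\frac12}(c)V_{i+\frac12}$. If all $\lambda_{i+\frac12}(c)\ge0$, then the $V$-length of $P(c)$ satisfies $$L_V(P(c))=\sum_{i=1}^{2n}\lambda_{i+\frac12}(c)=2c\,A(U),$$ where $A(U)=\frac12\sum_{i=1}^{2n}[U_i,U_{i+1}]$ is the area of $U$.
   Context: $[x,y]$ denotes the determinant of the matrix with columns $x,y\in\mathbb{R}^2$. Fix $n\ge2$; indices (integer and half-integer) are read modulo $2n$. $U$ is a convex $2n$-gon with distinct vertices $U_1,\dots,U_{2n}$ in counterclockwise order with $U_{i+n}=-U_i$, and $V_{i+\frac12}=(U_{i+1}-U_i)/[U_i,U_{i+1}]$. Let $a>0$ and let $P$ be a convex polygon with nonempty interior and vertex list $P_1,\dots,P_{2n}$ (consecutive entries may coincide) with $P_{i+1}-P_i$ a nonnegative multiple of $V_{i+\frac12}$ and $P_i-P_{i+n}=2aU_i$ for all $i$ (a polygon of constant $U$-width). Its central equidistant $M$ has vertices $M_i=\frac12(P_i+P_{i+n})$ (so $M_{i+n}=M_i$). The $V$-length of a polygon $Q_1,\dots,Q_{2n}$ with $Q_{i+1}-Q_i=\lambda_{i+\frac12}V_{i+\frac12}$, $\lambda_{i+\frac12}\ge0$, is $L_V(Q)=\sum_i\lambda_{i+\frac12}$. *)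

(* Polygon vertex lists are functions nat -> 'rV[R]_2, periodic of period 2n;
   the paper's index i (1..2n) is shifted to 0..2n-1, and the half-integer
   index i+1/2 is represented by the integer i. *)
From HB Require Import structures.
From mathcomp Require Import all_boot all_order all_algebra.
Set Implicit Arguments. Unset Strict Implicit. Unset Printing Implicit Defensive.
Import Order.TTheory GRing.Theory Num.Theory.
Local Open Scope ring_scope.

Section Defs.
Variable R : realFieldType.
Notation pt := 'rV[R]_2.

Definition det2 (x y : pt) : R := x 0 0 * y 0 1 - x 0 1 * y 0 0.

Definition Vdir (U : nat -> pt) (i : nat) : pt :=
  (det2 (U i) (U i.+1))^-1 *: (U i.+1 - U i).

(* U is a convex 2n-gon with distinct vertices U_0..U_{2n-1} in
   counterclockwise order (strict convex position: every other vertex lies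
   strictly to the left of each directed edge), indices mod 2n, and
   centrally symmetric: U_{i+n} = -U_i. *)
Definition sym_convex_polygon (n : nat) (U : nat -> pt) : Prop :=
  [/\ (forall i, U (i + 2 * n)%N = U i),
      (forall i, U (i + n)%N = - U i),
      (forall i j, (i < 2 * n)%N -> (j < 2 * n)%N -> i <> j -> U i <> U j)
    & (forall i j, (i < 2 * n)%N -> (j < 2 * n)%N -> j <> i ->
         j <> (i.+1 %% (2 * n))%N ->
         0 < det2 (U i.+1 - U i) (U j - U i))].

Definition const_width_polygon (n : nat) (U : nat -> pt) (a : R)
    (P : nat -> pt) : Prop :=
  [/\ (forall i, P (i + 2 * n)%N = P i),
      (* convexity: all vertices weakly to the left of every edge *)
      (forall i j, (i < 2 * n)%N -> (j < 2 * n)%N ->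
         0 <= det2 (P i.+1 - P i) (P j - P i)),
      (* nonempty interior: the vertices are not all collinear *)
      (exists i j k, [/\ (i < 2 * n)%N, (j < 2 * n)%N, (k < 2 * n)%N &
         det2 (P j - P i) (P k - P i) != 0]),
      (forall i, exists2 mu : R, 0 <= mu & P i.+1 - P i = mu *: Vdir U i)
    & (forall i, P i - P (i + n)%N = (2 * a) *: U i)].

Definition central_equidistant (n : nat) (P : nat -> pt) (i : nat) : pt :=
  2^-1 *: (P i + P (i + n)%N).

Definition Pc (n : nat) (U P : nat -> pt) (c : R) (i : nat) : pt :=
  central_equidistant n P i + c *: U i.

Definition areaU (n : nat) (U : nat -> pt) : R :=
  2^-1 * \sum_(i < 2 * n) det2 (U i) (U i.+1).

(* V-length of Q given its edge coefficients lam (Q_{i+1}-Q_i = lam_i V_{i+1/2}) *)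
Definition V_length (n : nat) (lam : nat -> R) : R := \sum_(i < 2 * n) lam i.

End Defs.

From HB Require Import structures.
From mathcomp Require Import all_boot all_order all_algebra.
From mathcomp Require Import zify ring.
Import Order.TTheory GRing.Theory Num.Theory.
Local Open Scope ring_scope.

(* Since [U_i, V_{i+1/2}] = 1, the coefficient lambda_{i+1/2}(c) is
   [U_i, P_{i+1}(c) - P_i(c)].  Expanding P(c) = M + c U, the U-part contributes
   c [U_i, U_{i+1}], summing to 2 c A(U).  Because U_{i+n} = -U_i, the M-part is
   (f_i - f_{i+n}) / 2 with f_j = [U_j, P_{j+1} - P_j], whose sum over a full
   period vanishes. *)

Section Det2.
Variable R : realFieldType.
Implicit Types (x y : 'rV[R]_2) (k : R).

Lemma det2Zr x y k : det2 x (k *: y) = k * det2 x y.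
Proof. by rewrite /det2 !mxE; ring. Qed.

Lemma det2_subr_diag x y : det2 x (y - x) = det2 x y.
Proof. by rewrite /det2 !mxE; ring. Qed.

Lemma det2_edge_opp x y : det2 (y - x) (- x - x) = 2 * det2 x y.
Proof. by rewrite /det2 !mxE; ring. Qed.

Lemma det2_Vdir (U : nat -> 'rV[R]_2) i :
  det2 (U i) (U i.+1) != 0 -> det2 (U i) (Vdir U i) = 1.
Proof. by move=> nz; rewrite /Vdir det2Zr det2_subr_diag mulVf. Qed.

Lemma edge_coefE (U : nat -> 'rV[R]_2) i x k :
  det2 (U i) (U i.+1) != 0 -> x = k *: Vdir U i -> k = det2 (U i) x.
Proof. by move=> nz ->; rewrite det2Zr det2_Vdir ?mulr1. Qed.

End Det2.

Lemma sum_periodic_shift (V : nmodType) (m k : nat) (f : nat -> V) :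
  (forall i, f (i + m)%N = f i) ->
  \sum_(i < m) f (i + k)%N = \sum_(i < m) f i.
Proof.
have shift1 g : (forall i, g (i + m)%N = g i) ->
    \sum_(i < m) g i.+1 = \sum_(i < m) g i :> V.
  case: m {f} => [|m] gP; first by rewrite !big_ord0.
  by rewrite big_ord_recr big_ord_recl /= -[m.+1]add0n gP addrC.
elim: k f => [|k IHk] f fP; first by apply: eq_bigr => i _; rewrite addn0.
rewrite -[RHS](IHk _ fP) -(shift1 (fun i => f (i + k)%N)) => [|i].
  by apply: eq_bigr => i _; rewrite addnS.
by rewrite addnAC fP.
Qed.

Section SymConvexPolygon.
Variables (R : realFieldType) (n : nat) (U : nat -> 'rV[R]_2).
Hypotheses (n_ge2 : (2 <= n)%N) (symU : sym_convex_polygon n U).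

Lemma sym_convex_opposite i : (i < 2 * n)%N ->
  exists j, [/\ (j < 2 * n)%N, j <> i, j <> (i.+1 %% (2 * n))%N & U j = - U i].
Proof.
case: symU => _ Uopp _ _ lt_i2n.
have [lt_in | le_ni] := ltnP i n.
  exists (i + n)%N; split; rewrite ?Uopp //; try lia.
  by rewrite modn_small; lia.
exists (i - n)%N; split; try lia.
- have [lt_i1 | ge_i1] := ltnP i.+1 (2 * n); first by rewrite modn_small; lia.
  by rewrite (_ : i.+1 = 2 * n)%N ?modnn; lia.
- by rewrite -{2}(subnK le_ni) Uopp opprK.
Qed.

(* Convexity applied to the edge U_i U_{i+1} and the opposite vertex -U_i. *)
Lemma sym_convex_det2_neq0 i : (i < 2 * n)%N -> det2 (U i) (U i.+1) != 0.
Proof.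
move=> lt_i2n; case: symU => _ _ _ Uconv.
have [j [lt_j2n neq_ji neq_ji1 Uj]] := sym_convex_opposite i lt_i2n.
have := Uconv i j lt_i2n lt_j2n neq_ji neq_ji1.
rewrite Uj det2_edge_opp pmulr_rgt0 ?ltr0n //.
by apply: contraTneq => ->; rewrite ltxx.
Qed.

End SymConvexPolygon.

Section EquidistantFamily.
Variables (R : realFieldType) (n : nat) (U P : nat -> 'rV[R]_2) (c : R).
Hypothesis Uopp : forall i, U (i + n)%N = - U i.

Let f j := det2 (U j) (P j.+1 - P j).

Lemma det2_Pc_edge i :
  det2 (U i) (Pc n U P c i.+1 - Pc n U P c i)
  = 2^-1 * (f i - f (i + n)%N) + c * det2 (U i) (U i.+1).
Proof. by rewrite /f /Pc /central_equidistant -addSn Uopp /det2 !mxE; ring. Qed.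

Hypothesis Pper : forall i, P (i + 2 * n)%N = P i.

Lemma sum_det2_Pc_edge :
  \sum_(i < 2 * n) det2 (U i) (Pc n U P c i.+1 - Pc n U P c i)
  = c * \sum_(i < 2 * n) det2 (U i) (U i.+1).
Proof.
have Uper i : U (i + 2 * n)%N = U i.
  by rewrite mul2n -addnn addnA !Uopp opprK.
have fper i : f (i + 2 * n)%N = f i by rewrite /f Uper -addSn !Pper.
under eq_bigr do rewrite det2_Pc_edge.
rewrite big_split /= -!mulr_sumr sumrB sum_periodic_shift //.
by rewrite subrr mulr0 add0r.
Qed.

End EquidistantFamily.

Theorem proposition3p1 (R : realFieldType) (n : nat) (U : nat -> 'rV[R]_2)
    (a : R) (P : nat -> 'rV[R]_2) (c : R) (lam : nat -> R) :
  (2 <= n)%N ->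
  sym_convex_polygon n U ->
  0 < a ->
  const_width_polygon n U a P ->
  (forall i, (i < 2 * n)%N -> Pc n U P c i.+1 - Pc n U P c i = lam i *: Vdir U i) ->
  (forall i, (i < 2 * n)%N -> 0 <= lam i) ->
  V_length n lam = 2 * c * areaU n U.
Proof.
move=> n_ge2 symU _ [Pper _ _ _ _] Pc_edge _.
have lamE (i : 'I_(2 * n)) : lam i = det2 (U i) (Pc n U P c i.+1 - Pc n U P c i).
  apply: edge_coefE (Pc_edge i (ltn_ord i)).
  exact: sym_convex_det2_neq0 n_ge2 symU i (ltn_ord i).
have [_ Uopp _ _] := symU.
rewrite /V_length (eq_bigr _ (fun i _ => lamE i)) sum_det2_Pc_edge //.
by rewrite /areaU mulrAC -!mulrA mulVKf ?pnatr_eq0 // mulrC.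
Qed.
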